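(* Let $Y_1,\dots,Y_m$ be independent $\mathbb{Z}^d$-valued random vectors, $W:=\sum_{i=1}^mY_i$, $u_i:=\min_{1\le j\le d}\{1-d_{TV}(\mathcal{L}(Y_i),\mathcal{L}(Y_i+e^{(j)}))\}$ and $s_m:=\sum_{i=1}^mu_i>0$. Then there is a universal constant $C$ such that $\max_{1\le j\le d}d_{TV}(\mathcal{L}(W),\mathcal{L}(W+e^{(j)}))\le C\,s_m^{-1/2}$.
   Context: $e^{(j)}$ is the $j$-th coordinate vector of $\mathbb{Z}^d$; $d_{TV}$ is total variation distance. *)

From Stdlib Require Import Reals List ZArith Lra ClassicalEpsilon.
Open Scope R_scope.

(* Points of Z^d are lists of integers of length d.  A law (probability
   distribution) on Z^d is a probability mass function p : list Z -> R
   (only its values at points of length d matter). *)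

Definition inZd (d : nat) (x : list Z) : Prop := length x = d.

Definition fsum (f : list Z -> R) (l : list (list Z)) : R :=
  fold_right (fun x a => f x + a) 0 l.

Definition nn_sum (d : nat) (f : list Z -> R) (S : R) : Prop :=
  is_lub (fun r => exists l, NoDup l /\ Forall (inZd d) l /\ r = fsum f l) S.

Definition is_pmf (d : nat) (p : list Z -> R) : Prop :=
  (forall x, 0 <= p x) /\ nn_sum d p 1.

Definition vadd (x y : list Z) : list Z :=
  map (fun ab => (fst ab + snd ab)%Z) (combine x y).
Definition vsub (x y : list Z) : list Z :=
  map (fun ab => (fst ab - snd ab)%Z) (combine x y).

(* j-th coordinate vector e^(j) of Z^d, j = 0, ..., d-1 *)
Definition evec (d j : nat) : list Z :=
  map (fun k => if Nat.eqb k j then 1%Z else 0%Z) (seq 0 d).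

(* law of Y + v, when p is the law of Y *)
Definition law_shift (p : list Z -> R) (v : list Z) : list Z -> R :=
  fun x => p (vsub x v).

Definition choose_R (P : R -> Prop) : R := epsilon (inhabits 0) P.

(* law of the sum of two independent random vectors: convolution *)
Definition conv (d : nat) (p q : list Z -> R) : list Z -> R :=
  fun x => choose_R (nn_sum d (fun y => p y * q (vsub x y))).

Definition delta0 (d : nat) : list Z -> R :=
  fun x => if list_eq_dec Z.eq_dec x (repeat 0%Z d) then 1 else 0.

(* law of Y_1 + ... + Y_m for independent Y_i with laws ps *)
Definition sum_law (d : nat) (ps : list (list Z -> R)) : list Z -> R :=
  fold_right (conv d) (delta0 d) ps.

Definition dTV (d : nat) (p q : list Z -> R) : R :=
  choose_R (fun t => nn_sum d (fun x => Rabs (p x - q x)) (2 * t)).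

Definition min_coord (d : nat) (f : nat -> R) : R :=
  fold_right (fun j a => Rmin (f j) a) (f 0%nat) (seq 1 (d - 1)).

Definition u_coef (d : nat) (p : list Z -> R) : R :=
  min_coord d (fun j => 1 - dTV d p (law_shift p (evec d j))).

Definition s_coef (d : nat) (ps : list (list Z -> R)) : R :=
  fold_right (fun p a => u_coef d p + a) 0 ps.

From Stdlib Require Import Reals List ZArith Lra Lia Psatz ClassicalEpsilon Permutation.
Open Scope R_scope.

(* Fix a coordinate vector h and, for a law mu on Z^d, let V_n(mu) be the l^1 norm of
   mu * (beta_n - beta_n(. - h)), where beta_n is the law of B h with B ~ Binomial(n, 1/2).
   If a = 1 - d_TV(p, p(. - h)), then p is a mixture with weight a of a law of the form
   q * (delta_0 + delta_h)/2 and another law, and the second factor merges into beta_n;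
   hence V_n(p * mu) <= (1 - a) V_n(mu) + a V_(n+1)(mu).  Since V_n(delta_0) is twice the
   largest Binomial(n, 1/2) probability, V_n(delta_0)^2 (n + 1) <= 4, and induction over the
   summands (with a >= u_i) gives V_n(L(W))^2 (n + 1 + s_m/2) <= 4.  At n = 0 this reads
   4 d_TV(L(W), L(W + h))^2 (1 + s_m/2) <= 4. *)

Lemma fsum_cons f x l : fsum f (x :: l) = f x + fsum f l.
Proof. reflexivity. Qed.

Lemma fsum_ext f g l : (forall x, In x l -> f x = g x) -> fsum f l = fsum g l.
Proof.
  induction l as [|a l IH]; intros H; [reflexivity|].
  rewrite !fsum_cons, H, IH; simpl; auto.
  intros; apply H; simpl; auto.
Qed.

Lemma fsum_le f g l : (forall x, In x l -> f x <= g x) -> fsum f l <= fsum g l.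
Proof.
  induction l as [|a l IH]; intros H; [simpl; lra|].
  rewrite !fsum_cons. apply Rplus_le_compat; simpl in *; auto.
Qed.

Lemma fsum_ge0 f l : (forall x, In x l -> 0 <= f x) -> 0 <= fsum f l.
Proof.
  intros H. apply Rle_trans with (fsum (fun _ => 0) l); [|now apply fsum_le].
  clear H. induction l as [|a l IH]; simpl in *; lra.
Qed.

Lemma fsum_add f g l : fsum (fun x => f x + g x) l = fsum f l + fsum g l.
Proof. induction l as [|a l IH]; [simpl; lra|]. rewrite !fsum_cons, IH. lra. Qed.

Lemma fsum_scal c f l : fsum (fun x => c * f x) l = c * fsum f l.
Proof. induction l as [|a l IH]; [simpl; lra|]. rewrite !fsum_cons, IH. lra. Qed.

Lemma fsum_map f g l : fsum f (map g l) = fsum (fun x => f (g x)) l.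
Proof.
  induction l as [|a l IH]; [reflexivity|]. simpl map. rewrite !fsum_cons, IH. reflexivity.
Qed.

Lemma fsum_perm f l1 l2 : Permutation l1 l2 -> fsum f l1 = fsum f l2.
Proof. induction 1; simpl in *; lra. Qed.

Lemma fsum_incl f l1 l2 : NoDup l1 -> incl l1 l2 -> (forall x, In x l2 -> 0 <= f x) ->
  fsum f l1 <= fsum f l2.
Proof.
  revert l2; induction l1 as [|a l1 IH]; intros l2 Hnd Hi Hf.
  - apply fsum_ge0; auto.
  - inversion Hnd as [|? ? Ha Hnd1]; subst.
    destruct (in_split a l2 (Hi a (or_introl eq_refl))) as [L1 [L2 ->]].
    rewrite (fsum_perm f (L1 ++ a :: L2) (a :: L1 ++ L2))
      by (symmetry; apply Permutation_middle).
    rewrite !fsum_cons. apply Rplus_le_compat_l. apply IH; auto.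
    + intros y Hy. assert (Hy' : In y (L1 ++ a :: L2)) by (apply Hi; simpl; auto).
      apply in_app_or in Hy'. apply in_or_app. simpl in Hy'.
      destruct Hy' as [|[->|]]; tauto.
    + intros y Hy. apply Hf. apply in_app_or in Hy; apply in_or_app; simpl; tauto.
Qed.

Fixpoint sum_lt (K : nat) (f : nat -> R) : R :=
  match K with O => 0 | S K' => sum_lt K' f + f K' end.

Lemma sum_lt_ext K f g : (forall k, (k < K)%nat -> f k = g k) -> sum_lt K f = sum_lt K g.
Proof. induction K; simpl; intros H; auto. rewrite IHK, H; auto. Qed.

Lemma sum_lt_add K f g : sum_lt K (fun k => f k + g k) = sum_lt K f + sum_lt K g.
Proof. induction K; simpl; [lra|]. rewrite IHK; lra. Qed.

Lemma sum_lt_scal K c f : sum_lt K (fun k => c * f k) = c * sum_lt K f.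
Proof. induction K; simpl; [lra|]. rewrite IHK; lra. Qed.

Lemma sum_lt_le K f g : (forall k, (k < K)%nat -> f k <= g k) -> sum_lt K f <= sum_lt K g.
Proof.
  induction K; simpl; intros H; [lra|].
  apply Rplus_le_compat; [apply IHK; auto|apply H; lia].
Qed.

Lemma sum_lt_abs K f : Rabs (sum_lt K f) <= sum_lt K (fun k => Rabs (f k)).
Proof.
  induction K; simpl; [rewrite Rabs_R0; lra|].
  eapply Rle_trans; [apply Rabs_triang|lra].
Qed.

Lemma sum_lt_shift K f : sum_lt (S K) f = f O + sum_lt K (fun k => f (S k)).
Proof. induction K; simpl in *; [lra|]. rewrite IHK. lra. Qed.

Definition nonneg_on d (f : list Z -> R) : Prop := forall x, inZd d x -> 0 <= f x.

Definition partial_sums_le d (f : list Z -> R) (M : R) : Prop :=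
  forall l, NoDup l -> Forall (inZd d) l -> fsum f l <= M.

Definition summable d (f : list Z -> R) : Prop :=
  nonneg_on d f /\ exists M, partial_sums_le d f M.

(* An arbitrary real when [f] is not summable. *)
Definition sum_Zd d (f : list Z -> R) : R := choose_R (nn_sum d f).

Lemma Forall_In {A} (P : A -> Prop) l x : Forall P l -> In x l -> P x.
Proof. rewrite Forall_forall; auto. Qed.

Lemma nn_sum_exists d f : summable d f -> exists S, nn_sum d f S.
Proof.
  intros [_ [M HM]].
  destruct (completeness (fun r => exists l, NoDup l /\ Forall (inZd d) l /\ r = fsum f l))
    as [S HS]; [|exists 0, nil; repeat constructor|now exists S].
  exists M. intros r (l & H1 & H2 & ->). auto.
Qed.

Lemma sum_Zd_spec d f : summable d f -> nn_sum d f (sum_Zd d f).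
Proof. intros H. apply (epsilon_spec (inhabits 0) (nn_sum d f)), nn_sum_exists, H. Qed.

Lemma sum_Zd_eq d f S : nn_sum d f S -> sum_Zd d f = S.
Proof.
  intros H. apply (is_lub_u _ _ _ (epsilon_spec (inhabits 0) (nn_sum d f) (ex_intro _ S H)) H).
Qed.

Lemma fsum_le_sum_Zd d f l :
  summable d f -> NoDup l -> Forall (inZd d) l -> fsum f l <= sum_Zd d f.
Proof. intros H H1 H2. apply (proj1 (sum_Zd_spec d f H)). now exists l. Qed.

Lemma sum_Zd_le_ub d f M : summable d f -> partial_sums_le d f M -> sum_Zd d f <= M.
Proof.
  intros H HM. apply (proj2 (sum_Zd_spec d f H)). intros r (l & H1 & H2 & ->). auto.
Qed.

Lemma sum_Zd_ge0 d f : summable d f -> 0 <= sum_Zd d f.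
Proof. intros H. change 0 with (fsum f nil). apply fsum_le_sum_Zd; auto; constructor. Qed.

Lemma le_sum_Zd d f x : summable d f -> inZd d x -> f x <= sum_Zd d f.
Proof.
  intros H Hx. replace (f x) with (fsum f (x :: nil)) by (simpl; ring).
  apply fsum_le_sum_Zd; auto; repeat constructor; auto.
Qed.

Lemma sum_Zd_mono d f g : nonneg_on d f -> (forall x, inZd d x -> f x <= g x) -> summable d g ->
  summable d f /\ sum_Zd d f <= sum_Zd d g.
Proof.
  intros Hf Hle Hg.
  assert (B : partial_sums_le d f (sum_Zd d g)).
  { intros l H1 H2. eapply Rle_trans; [|apply fsum_le_sum_Zd; eauto].
    apply fsum_le. intros; apply Hle. eapply Forall_In; eauto. }
  assert (summable d f) by (split; eauto). split; auto. apply sum_Zd_le_ub; auto.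
Qed.

Lemma sum_Zd_ext d f g : (forall x, inZd d x -> g x = f x) -> summable d f ->
  summable d g /\ sum_Zd d g = sum_Zd d f.
Proof.
  intros E Hf.
  assert (Hn : nonneg_on d g) by (intros x Hx; rewrite E; auto; apply Hf; auto).
  destruct (sum_Zd_mono d g f Hn) as [Hg L1]; auto. { intros; rewrite E; auto; lra. }
  destruct (sum_Zd_mono d f g (proj1 Hf)) as [_ L2]; auto. { intros; rewrite E; auto; lra. }
  split; auto. lra.
Qed.

Lemma fsum_add_le_sum_Zd d f g k l1 l2 :
  summable d f -> summable d g -> summable d k -> (forall x, inZd d x -> k x = f x + g x) ->
  NoDup l1 -> Forall (inZd d) l1 -> NoDup l2 -> Forall (inZd d) l2 ->
  fsum f l1 + fsum g l2 <= sum_Zd d k.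
Proof.
  intros Hf Hg Hk E H11 H12 H21 H22.
  set (L := nodup (list_eq_dec Z.eq_dec) (l1 ++ l2)).
  assert (HL : forall x, In x L <-> In x l1 \/ In x l2).
  { intros x. unfold L. rewrite nodup_In. split; [apply in_app_or|apply in_or_app]. }
  assert (ZL : forall x, In x L -> inZd d x).
  { intros x Hx. apply HL in Hx as [Hx|Hx];
      [exact (Forall_In _ _ _ H12 Hx)|exact (Forall_In _ _ _ H22 Hx)]. }
  assert (fsum f l1 <= fsum f L).
  { apply fsum_incl; auto; [intros x Hx; apply HL; auto|intros; apply Hf; auto]. }
  assert (fsum g l2 <= fsum g L).
  { apply fsum_incl; auto; [intros x Hx; apply HL; auto|intros; apply Hg; auto]. }
  assert (fsum k L <= sum_Zd d k)
    by (apply fsum_le_sum_Zd; [auto|apply NoDup_nodup|apply Forall_forall; auto]).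
  rewrite (fsum_ext k (fun x => f x + g x)), fsum_add in * by auto. lra.
Qed.

Lemma sum_Zd_add d f g k : summable d f -> summable d g ->
  (forall x, inZd d x -> k x = f x + g x) ->
  summable d k /\ sum_Zd d k = sum_Zd d f + sum_Zd d g.
Proof.
  intros Hf Hg E.
  assert (B : partial_sums_le d k (sum_Zd d f + sum_Zd d g)).
  { intros l H1 H2. rewrite (fsum_ext _ (fun x => f x + g x)), fsum_add.
    - pose proof (fsum_le_sum_Zd d f l Hf H1 H2); pose proof (fsum_le_sum_Zd d g l Hg H1 H2); lra.
    - intros; apply E; eapply Forall_In; eauto. }
  assert (Hk : summable d k).
  { split; [|eauto]. intros x Hx; rewrite E; auto.
    pose proof (proj1 Hf x Hx); pose proof (proj1 Hg x Hx); lra. }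
  split; auto. apply Rle_antisym; [apply sum_Zd_le_ub; auto|].
  cut (sum_Zd d f <= sum_Zd d k - sum_Zd d g); [lra|].
  apply sum_Zd_le_ub; auto. intros l1 H11 H12.
  cut (sum_Zd d g <= sum_Zd d k - fsum f l1); [lra|].
  apply sum_Zd_le_ub; auto. intros l2 H21 H22.
  pose proof (fsum_add_le_sum_Zd d f g k l1 l2 Hf Hg Hk E H11 H12 H21 H22). lra.
Qed.

Lemma sum_Zd_scal_le d c f k : 0 <= c -> summable d f ->
  (forall x, inZd d x -> k x = c * f x) ->
  summable d k /\ sum_Zd d k <= c * sum_Zd d f.
Proof.
  intros Hc Hf E.
  assert (B : partial_sums_le d k (c * sum_Zd d f)).
  { intros l H1 H2. rewrite (fsum_ext _ (fun x => c * f x)), fsum_scal.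
    - apply Rmult_le_compat_l; auto. apply fsum_le_sum_Zd; auto.
    - intros; apply E; eapply Forall_In; eauto. }
  assert (Hk : summable d k).
  { split; [|eauto]. intros x Hx; rewrite E; auto. pose proof (proj1 Hf x Hx); nra. }
  split; auto. apply sum_Zd_le_ub; auto.
Qed.

Lemma sum_Zd_scal d c f k : 0 <= c -> summable d f ->
  (forall x, inZd d x -> k x = c * f x) ->
  summable d k /\ sum_Zd d k = c * sum_Zd d f.
Proof.
  intros Hc Hf E. destruct (sum_Zd_scal_le d c f k Hc Hf E) as [Hk Le].
  split; auto. destruct (Req_dec c 0) as [->|Hc0].
  - pose proof (sum_Zd_ge0 d k Hk). lra.
  - destruct (sum_Zd_scal_le d (/ c) k f) as [_ Ge]; auto.
    { apply Rlt_le, Rinv_0_lt_compat; lra. }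
    { intros x Hx. rewrite E; auto. field; auto. }
    apply Rmult_le_compat_l with (r := c) in Ge; [|lra].
    rewrite <- Rmult_assoc, Rinv_r, Rmult_1_l in Ge; auto. lra.
Qed.

Lemma sum_Zd_zero d k : (forall x, inZd d x -> k x = 0) -> summable d k /\ sum_Zd d k = 0.
Proof.
  intros E.
  assert (B : partial_sums_le d k 0).
  { intros l _ H2. rewrite (fsum_ext k (fun _ => 0)).
    - clear. induction l; simpl in *; lra.
    - intros; apply E; eapply Forall_In; eauto. }
  assert (Hk : summable d k) by (split; [intros x Hx; rewrite E; auto; lra|eauto]).
  split; auto. apply Rle_antisym; [apply sum_Zd_le_ub|apply sum_Zd_ge0]; auto.
Qed.

Lemma partial_sums_le_comp d f M (tau : list Z -> list Z) :
  (forall x, inZd d x -> inZd d (tau x)) ->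
  (forall x y, inZd d x -> inZd d y -> tau x = tau y -> x = y) ->
  partial_sums_le d f M -> partial_sums_le d (fun x => f (tau x)) M.
Proof.
  intros Tin Tinj HM l H1 H2. rewrite <- fsum_map. apply HM.
  - apply NoDup_map_NoDup_ForallPairs; auto.
    intros x y Hx Hy. apply Tinj; eapply Forall_In; eauto.
  - apply Forall_forall. intros y Hy. apply in_map_iff in Hy as [x [<- Hx]].
    apply Tin. eapply Forall_In; eauto.
Qed.

Lemma sum_Zd_reindex d f (tau tau' : list Z -> list Z) : summable d f ->
  (forall x, inZd d x -> inZd d (tau x)) -> (forall x, inZd d x -> inZd d (tau' x)) ->
  (forall x, inZd d x -> tau' (tau x) = x) -> (forall x, inZd d x -> tau (tau' x) = x) ->
  summable d (fun x => f (tau x)) /\ sum_Zd d (fun x => f (tau x)) = sum_Zd d f.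
Proof.
  intros Hf T1 T2 E1 E2.
  assert (Inj : forall t t' : list Z -> list Z, (forall x, inZd d x -> t' (t x) = x) ->
            forall x y, inZd d x -> inZd d y -> t x = t y -> x = y).
  { intros t t' E x y Hx Hy Exy. rewrite <- (E x), <- (E y), Exy; auto. }
  assert (Hs : summable d (fun x => f (tau x))).
  { destruct Hf as [Hn [M HM]]. split; [intros x Hx; apply Hn; auto|].
    exists M. apply partial_sums_le_comp; eauto. }
  split; auto. apply Rle_antisym.
  - apply sum_Zd_le_ub; auto. apply partial_sums_le_comp; eauto.
    intros l; apply fsum_le_sum_Zd; auto.
  - apply sum_Zd_le_ub; auto. intros l H1 H2.
    rewrite (fsum_ext f (fun x => f (tau (tau' x)))).
    + apply (partial_sums_le_comp d (fun x => f (tau x)) _ tau'); eauto.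
      intros l'; apply fsum_le_sum_Zd; auto.
    + intros x Hx. rewrite E2; auto. eapply Forall_In; eauto.
Qed.

Lemma sum_Zd_lin_comb d K (c : nat -> R) (F : nat -> list Z -> R) :
  (forall k, (k < K)%nat -> 0 <= c k /\ summable d (F k)) ->
  summable d (fun y => sum_lt K (fun k => c k * F k y)) /\
  sum_Zd d (fun y => sum_lt K (fun k => c k * F k y)) = sum_lt K (fun k => c k * sum_Zd d (F k)).
Proof.
  induction K; intros H; [apply sum_Zd_zero; auto|].
  destruct IHK as [S1 E1]; [intros; apply H; lia|].
  destruct (H K ltac:(lia)) as [HcK HFK].
  destruct (sum_Zd_scal d (c K) (F K) (fun y => c K * F K y)) as [S2 E2]; auto.
  destruct (sum_Zd_add d _ _ (fun y => sum_lt (S K) (fun k => c k * F k y)) S1 S2) as [S3 E3];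
    [reflexivity|].
  split; auto. rewrite E3, E1, E2. reflexivity.
Qed.

Lemma sum_Zd_fsum d (X : list (list Z)) (G : list Z -> list Z -> R) :
  (forall x, In x X -> summable d (G x)) ->
  summable d (fun y => fsum (fun x => G x y) X) /\
  sum_Zd d (fun y => fsum (fun x => G x y) X) = fsum (fun x => sum_Zd d (G x)) X.
Proof.
  induction X as [|a X IH]; intros H; [apply sum_Zd_zero; auto|].
  destruct IH as [S1 E1]; [intros; apply H; simpl; auto|].
  destruct (sum_Zd_add d (G a) _ (fun y => fsum (fun x => G x y) (a :: X))
              (H a (or_introl eq_refl)) S1)
    as [S2 E2]; [reflexivity|].
  split; auto. rewrite E2, E1. reflexivity.
Qed.

Lemma abs_sum_Zd_sub_le d P N : summable d P -> summable d N ->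
  summable d (fun y => Rabs (P y - N y)) /\
  Rabs (sum_Zd d P - sum_Zd d N) <= sum_Zd d (fun y => Rabs (P y - N y)).
Proof.
  intros SP SN. set (A := fun y => Rabs (P y - N y)).
  destruct (sum_Zd_add d P N (fun y => P y + N y) SP SN) as [SPN _]; [reflexivity|].
  assert (SA : summable d A).
  { apply (sum_Zd_mono d _ (fun y => P y + N y)); auto.
    - intros x _; apply Rabs_pos.
    - intros x Hx. pose proof (proj1 SP x Hx); pose proof (proj1 SN x Hx).
      unfold A, Rabs; destruct Rcase_abs; lra. }
  destruct (sum_Zd_add d N A (fun y => N y + A y) SN SA) as [S1 E1]; [reflexivity|].
  destruct (sum_Zd_add d P A (fun y => P y + A y) SP SA) as [S2 E2]; [reflexivity|].
  destruct (sum_Zd_mono d P (fun y => N y + A y) (proj1 SP)) as [_ L1]; auto.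
  { intros x _. unfold A, Rabs; destruct Rcase_abs; lra. }
  destruct (sum_Zd_mono d N (fun y => P y + A y) (proj1 SN)) as [_ L2]; auto.
  { intros x _. unfold A, Rabs; destruct Rcase_abs; lra. }
  split; auto. apply Rabs_le. lra.
Qed.

Lemma abs_lin_comb_le_sum_Zd d K (c : nat -> R) (F : nat -> list Z -> R) :
  (forall k, (k < K)%nat -> summable d (F k)) ->
  summable d (fun y => Rabs (sum_lt K (fun k => c k * F k y))) /\
  Rabs (sum_lt K (fun k => c k * sum_Zd d (F k))) <=
    sum_Zd d (fun y => Rabs (sum_lt K (fun k => c k * F k y))).
Proof.
  intros HF.
  set (cp := fun k => Rmax (c k) 0). set (cn := fun k => Rmax (- c k) 0).
  assert (Ec : forall g : nat -> R,
             sum_lt K (fun k => c k * g k) =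
             sum_lt K (fun k => cp k * g k) - sum_lt K (fun k => cn k * g k)).
  { intros g.
    rewrite (sum_lt_ext K _ (fun k => cp k * g k + (-1) * (cn k * g k))), sum_lt_add, sum_lt_scal;
      [ring|].
    intros k _. replace (c k) with (cp k - cn k); [ring|].
    unfold cp, cn, Rmax. destruct (Rle_dec (c k) 0), (Rle_dec (- c k) 0); lra. }
  destruct (sum_Zd_lin_comb d K cp F) as [SP EP]; [intros; split; auto; apply Rmax_r|].
  destruct (sum_Zd_lin_comb d K cn F) as [SN EN]; [intros; split; auto; apply Rmax_r|].
  destruct (abs_sum_Zd_sub_le d _ _ SP SN) as [SA LA].
  destruct (sum_Zd_ext d _ (fun y => Rabs (sum_lt K (fun k => c k * F k y)))
              (fun y _ => f_equal Rabs (Ec (fun k => F k y))) SA) as [SA' EA'].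
  split; auto. rewrite EA', Ec, <- EP, <- EN. exact LA.
Qed.

Lemma sum_Zd_swap_le d (g : list Z -> list Z -> R) :
  (forall x y, inZd d x -> inZd d y -> 0 <= g x y) ->
  (forall y, inZd d y -> summable d (fun x => g x y)) ->
  summable d (fun y => sum_Zd d (fun x => g x y)) ->
  summable d (fun x => sum_Zd d (fun y => g x y)) /\
  sum_Zd d (fun x => sum_Zd d (fun y => g x y)) <= sum_Zd d (fun y => sum_Zd d (fun x => g x y)).
Proof.
  intros Hg Hy HT. set (T := fun y => sum_Zd d (fun x => g x y)) in *.
  assert (Hx : forall x, inZd d x -> summable d (fun y => g x y)).
  { intros x Hx. split; [intros y Hy'; auto|].
    exists (sum_Zd d T). intros l H1 H2. eapply Rle_trans; [|apply fsum_le_sum_Zd; eauto].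
    apply fsum_le. intros y Hyl. apply (le_sum_Zd d (fun x => g x y)); auto.
    apply Hy. eapply Forall_In; eauto. }
  assert (B : partial_sums_le d (fun x => sum_Zd d (fun y => g x y)) (sum_Zd d T)).
  { intros X H1 H2.
    destruct (sum_Zd_fsum d X g) as [S1 E1]; [intros x Hxx; apply Hx; eapply Forall_In; eauto|].
    change (fsum (fun x => sum_Zd d (g x)) X <= sum_Zd d T). rewrite <- E1.
    apply sum_Zd_mono; auto.
    - intros y Hy'. apply fsum_ge0. intros x Hxx; apply Hg; auto. eapply Forall_In; eauto.
    - intros y Hy'. apply fsum_le_sum_Zd; auto. }
  assert (S : summable d (fun x => sum_Zd d (fun y => g x y))).
  { split; eauto. intros x Hxx. apply sum_Zd_ge0; auto. }
  split; auto. apply sum_Zd_le_ub; auto.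
Qed.

Lemma dTV_sum_Zd d p q : summable d (fun x => Rabs (p x - q x)) ->
  dTV d p q = sum_Zd d (fun x => Rabs (p x - q x)) / 2.
Proof.
  intros H. set (P := fun t => nn_sum d (fun x => Rabs (p x - q x)) (2 * t)).
  assert (HP : P (sum_Zd d (fun x => Rabs (p x - q x)) / 2)).
  { unfold P. replace (2 * _) with (sum_Zd d (fun x => Rabs (p x - q x))) by field.
    apply sum_Zd_spec; auto. }
  pose proof (epsilon_spec (inhabits 0) P (ex_intro _ _ HP)) as HE.
  pose proof (is_lub_u _ _ _ HE HP). unfold dTV, choose_R. fold P. lra.
Qed.

Lemma length_map_combine (F : Z * Z -> Z) x y :
  length (map F (combine x y)) = Nat.min (length x) (length y).
Proof. rewrite length_map, length_combine. reflexivity. Qed.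

Lemma length_vsub d x y : length x = d -> length y = d -> length (vsub x y) = d.
Proof. intros; unfold vsub. rewrite length_map_combine; lia. Qed.

Lemma length_vadd d x y : length x = d -> length y = d -> length (vadd x y) = d.
Proof. intros; unfold vadd. rewrite length_map_combine; lia. Qed.

Lemma length_evec d j : length (evec d j) = d.
Proof. unfold evec. rewrite length_map, length_seq. reflexivity. Qed.

Lemma nth_map_combine (F : Z * Z -> Z) x y k :
  length x = length y -> (k < length x)%nat ->
  nth k (map F (combine x y)) 0%Z = F (nth k x 0%Z, nth k y 0%Z).
Proof.
  intros Hxy Hk. rewrite (nth_indep _ _ (F (0%Z, 0%Z))) by (rewrite length_map_combine; lia).
  rewrite map_nth, combine_nth by lia. reflexivity.
Qed.

Lemma vec_ext d x y : length x = d -> length y = d ->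
  (forall k, (k < d)%nat -> nth k x 0%Z = nth k y 0%Z) -> x = y.
Proof. intros Hx Hy H. apply nth_ext with 0%Z 0%Z; [lia|]. intros; apply H; lia. Qed.

Ltac vec_ext_tac d :=
  apply (vec_ext d);
  [ repeat first [apply length_vsub | apply length_vadd]; auto
  | repeat first [apply length_vsub | apply length_vadd]; auto
  | intros ?k ?Hk; unfold vsub, vadd;
    repeat (rewrite nth_map_combine;
            [|repeat rewrite length_map_combine; lia|repeat rewrite length_map_combine; lia]);
    simpl; lia ].

Lemma vadd_vsub d y h : length y = d -> length h = d -> vadd (vsub y h) h = y.
Proof. intros. vec_ext_tac d. Qed.

Lemma vsub_vadd d w h : length w = d -> length h = d -> vsub (vadd w h) h = w.
Proof. intros. vec_ext_tac d. Qed.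

Lemma vsub_comm d x a b : length x = d -> length a = d -> length b = d ->
  vsub (vsub x a) b = vsub (vsub x b) a.
Proof. intros. vec_ext_tac d. Qed.

Lemma vsub_vadd_r d z w h : length z = d -> length w = d -> length h = d ->
  vsub z (vadd w h) = vsub (vsub z h) w.
Proof. intros. vec_ext_tac d. Qed.

Fixpoint iter_vsub (h : list Z) (k : nat) (x : list Z) : list Z :=
  match k with O => x | S k' => iter_vsub h k' (vsub x h) end.

Lemma length_iter_vsub d h k x : length h = d -> length x = d -> length (iter_vsub h k x) = d.
Proof. revert x; induction k; simpl; intros; auto. apply IHk; auto. apply length_vsub; auto. Qed.

Lemma vsub_iter_vsub d h k x y : length h = d -> length x = d -> length y = d ->
  vsub (iter_vsub h k x) y = iter_vsub h k (vsub x y).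
Proof.
  revert x; induction k; simpl; intros; auto.
  rewrite IHk by (auto; apply length_vsub; auto). f_equal. apply (vsub_comm d); auto.
Qed.

Lemma sum_Zd_vsub_shift d h f : length h = d -> summable d f ->
  summable d (fun x => f (vsub x h)) /\ sum_Zd d (fun x => f (vsub x h)) = sum_Zd d f.
Proof.
  intros Hh Hf. apply sum_Zd_reindex with (tau' := fun x => vadd x h); auto;
    intros x Hx; unfold inZd in *.
  - apply length_vsub; auto.
  - apply length_vadd; auto.
  - apply (vadd_vsub d); auto.
  - apply (vsub_vadd d); auto.
Qed.

Lemma sum_Zd_vadd_shift d h f : length h = d -> summable d f ->
  summable d (fun x => f (vadd x h)) /\ sum_Zd d (fun x => f (vadd x h)) = sum_Zd d f.
Proof.
  intros Hh Hf. apply sum_Zd_reindex with (tau' := fun x => vsub x h); auto;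
    intros x Hx; unfold inZd in *.
  - apply length_vadd; auto.
  - apply length_vsub; auto.
  - apply (vsub_vadd d); auto.
  - apply (vadd_vsub d); auto.
Qed.

Lemma sum_Zd_iter_vsub d h k f : length h = d -> summable d f ->
  summable d (fun x => f (iter_vsub h k x)) /\
  sum_Zd d (fun x => f (iter_vsub h k x)) = sum_Zd d f.
Proof.
  revert f; induction k; intros f Hh Hf; [split; auto|].
  destruct (IHk f Hh Hf) as [S1 E1].
  destruct (sum_Zd_vsub_shift d h _ Hh S1) as [S2 E2]. split; auto. simpl. rewrite E2; auto.
Qed.

Lemma sum_Zd_conv_le d (c F : list Z -> R) : summable d c -> summable d F ->
  summable d (fun x => sum_Zd d (fun y => c y * F (vsub x y))) /\
  sum_Zd d (fun x => sum_Zd d (fun y => c y * F (vsub x y))) <= sum_Zd d c * sum_Zd d F.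
Proof.
  intros Sc SF.
  assert (Fy : forall y, inZd d y -> summable d (fun x => c y * F (vsub x y)) /\
                sum_Zd d (fun x => c y * F (vsub x y)) = c y * sum_Zd d F).
  { intros y Hy. destruct (sum_Zd_vsub_shift d y F Hy SF) as [S E]. rewrite <- E.
    apply sum_Zd_scal; auto. apply Sc; auto. }
  destruct (sum_Zd_scal d (sum_Zd d F) c (fun y => sum_Zd d (fun x => c y * F (vsub x y))))
    as [ST ET]; auto.
  { apply sum_Zd_ge0; auto. }
  { intros y Hy. rewrite (proj2 (Fy y Hy)). ring. }
  destruct (sum_Zd_swap_le d (fun x y => c y * F (vsub x y))) as [SC LC]; auto.
  { intros x y Hx Hy. apply Rmult_le_pos; [apply Sc|apply SF, length_vsub]; auto. }
  { intros y Hy; apply Fy; auto. }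
  split; auto. rewrite ET in LC. lra.
Qed.

Definition point_mass (a : list Z) (x : list Z) : R :=
  if list_eq_dec Z.eq_dec x a then 1 else 0.

Lemma fsum_point_mass_notin a l : ~ In a l -> fsum (point_mass a) l = 0.
Proof.
  induction l as [|x l IH]; intros Ha; [reflexivity|].
  rewrite fsum_cons, IH by (simpl in Ha; tauto). unfold point_mass.
  destruct (list_eq_dec Z.eq_dec x a) as [->|]; [simpl in Ha; tauto|lra].
Qed.

Lemma fsum_point_mass_le1 a l : NoDup l -> fsum (point_mass a) l <= 1.
Proof.
  induction 1 as [|x l Hx Hl IH]; [simpl; lra|]. rewrite fsum_cons. unfold point_mass at 1.
  destruct (list_eq_dec Z.eq_dec x a) as [->|].
  - rewrite fsum_point_mass_notin; auto. lra.
  - lra.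
Qed.

Lemma sum_Zd_delta0 d : summable d (delta0 d) /\ sum_Zd d (delta0 d) <= 1.
Proof.
  assert (Hn : nonneg_on d (delta0 d)) by (intros x _; unfold delta0; destruct list_eq_dec; lra).
  assert (B : partial_sums_le d (delta0 d) 1)
    by (intros l H _; apply (fsum_point_mass_le1 (repeat 0%Z d)); auto).
  split; [split; eauto|]. apply sum_Zd_le_ub; auto. split; eauto.
Qed.

(** * The symmetric binomial law and its discrete derivative *)

Fixpoint binom_half (n k : nat) : R :=
  match n with
  | O => match k with O => 1 | _ => 0 end
  | S n' => (binom_half n' k + match k with O => 0 | S k' => binom_half n' k' end) / 2
  end.

Definition binom_half_prev n k := match k with O => 0 | S k' => binom_half n k' end.
Definition binom_diff n k := binom_half n k - binom_half_prev n k.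
Definition binom_diff_prev n k := match k with O => 0 | S k' => binom_diff n k' end.

Lemma binom_half_S n k : binom_half (S n) k = (binom_half n k + binom_half_prev n k) / 2.
Proof. destruct k; reflexivity. Qed.

Lemma binom_diff_S n k : binom_diff (S n) k = (binom_diff n k + binom_diff_prev n k) / 2.
Proof.
  unfold binom_diff, binom_diff_prev, binom_half_prev. destruct k; simpl; [lra|].
  unfold binom_diff, binom_half_prev. destruct k; lra.
Qed.

Lemma binom_half_big n k : (n < k)%nat -> binom_half n k = 0.
Proof.
  revert k; induction n; intros [|k] Hk; simpl; try lia; [reflexivity|].
  rewrite !IHn by lia. lra.
Qed.

Lemma binom_half_ge0 n k : 0 <= binom_half n k.
Proof.
  revert k; induction n; intros [|k]; simpl; try lra.
  - pose proof (IHn 0%nat); lra.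
  - pose proof (IHn (S k)); pose proof (IHn k); lra.
Qed.

Lemma binom_half_ratio n k : INR (S k) * binom_half n (S k) = (INR n - INR k) * binom_half n k.
Proof.
  revert k; induction n; intros k.
  - simpl binom_half. destruct k; simpl; lra.
  - rewrite !binom_half_S. pose proof (IHn k) as H1.
    destruct k; simpl binom_half_prev.
    + rewrite !S_INR in *. simpl INR in *. lra.
    + pose proof (IHn k). rewrite !S_INR in *. lra.
Qed.

Lemma binom_diff_ge0 n k : (2 * k <= S n)%nat -> 0 <= binom_diff n k.
Proof.
  intros H. unfold binom_diff, binom_half_prev. destruct k; [pose proof (binom_half_ge0 n 0); lra|].
  pose proof (binom_half_ratio n k). pose proof (binom_half_ge0 n k).
  assert (INR (S k) <= INR n - INR k) by (rewrite <- minus_INR by lia; apply le_INR; lia).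
  assert (0 < INR (S k)) by (apply lt_0_INR; lia). nra.
Qed.

Lemma binom_diff_le0 n k : (S n <= 2 * k)%nat -> (1 <= k)%nat -> binom_diff n k <= 0.
Proof.
  intros H H1. unfold binom_diff, binom_half_prev. destruct k; [lia|].
  pose proof (binom_half_ratio n k). pose proof (binom_half_ge0 n k).
  assert (INR n <= INR (2 * k + 1)) by (apply le_INR; lia).
  rewrite plus_INR, mult_INR in *. rewrite S_INR in *. simpl INR in *.
  assert (0 < INR k + 1) by (pose proof (pos_INR k); lra). nra.
Qed.

(* Up to the mode [m] the signed differences telescope to [binom_half n m], and past it
   they telescope back down to [0]. *)
Lemma sum_abs_binom_diff_low n m K : (2 * m <= S n)%nat -> (K <= S m)%nat ->
  sum_lt K (fun k => Rabs (binom_diff n k)) = binom_half_prev n K.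
Proof.
  intros Hm. induction K; intros HK; [reflexivity|]. simpl sum_lt.
  rewrite IHK by lia. rewrite Rabs_right by (apply Rle_ge, binom_diff_ge0; lia).
  unfold binom_diff, binom_half_prev. lra.
Qed.

Lemma sum_abs_binom_diff_high n m K : (2 * m <= S n)%nat -> (n <= 2 * m)%nat -> (S m <= K)%nat ->
  sum_lt K (fun k => Rabs (binom_diff n k)) = 2 * binom_half n m - binom_half_prev n K.
Proof.
  intros Hm1 Hm2. induction K; intros HK; [lia|].
  destruct (Nat.eq_dec K m) as [->|HK'].
  - rewrite (sum_abs_binom_diff_low n m (S m)); auto. simpl. lra.
  - simpl sum_lt. rewrite IHK by lia. rewrite Rabs_left1 by (apply binom_diff_le0; lia).
    unfold binom_diff, binom_half_prev. lra.
Qed.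

Definition binom_diff_l1 n := sum_lt (n + 2) (fun k => Rabs (binom_diff n k)).

Lemma binom_diff_l1_mode n m : (2 * m <= S n)%nat -> (n <= 2 * m)%nat ->
  binom_diff_l1 n = 2 * binom_half n m.
Proof.
  intros. unfold binom_diff_l1. rewrite (sum_abs_binom_diff_high n m) by lia.
  replace (n + 2)%nat with (S (S n)) by lia.
  change (binom_half_prev n (S (S n))) with (binom_half n (S n)).
  rewrite (binom_half_big n (S n)) by lia. lra.
Qed.

Lemma binom_half_odd_mode t : binom_half (S (2 * t)) (S t) = binom_half (S (2 * t)) t.
Proof.
  pose proof (binom_half_ratio (S (2 * t)) t) as R.
  repeat rewrite ?S_INR, ?mult_INR in R. simpl INR in R.
  assert (0 < INR t + 1) by (pose proof (pos_INR t); lra).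
  apply Rmult_eq_reg_l with (INR t + 1); lra.
Qed.

Lemma binom_half_prev_central t :
  INR (S t) * binom_half_prev (2 * t) t = INR t * binom_half (2 * t) t.
Proof.
  destruct t as [|t]; [simpl; lra|].
  change (binom_half_prev (2 * S t) (S t)) with (binom_half (2 * S t) t).
  pose proof (binom_half_ratio (2 * S t) t) as R.
  rewrite mult_INR in R. rewrite !S_INR in *. simpl INR in *. lra.
Qed.

Lemma binom_half_central_S t :
  binom_half (2 * S t) (S t) * (2 * INR t + 2) = binom_half (2 * t) t * (2 * INR t + 1).
Proof.
  replace (2 * S t)%nat with (S (S (2 * t))) by lia.
  rewrite (binom_half_S (S (2 * t)) (S t)).
  change (binom_half_prev (S (2 * t)) (S t)) with (binom_half (S (2 * t)) t).
  rewrite binom_half_odd_mode, (binom_half_S (2 * t) t).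
  pose proof (binom_half_prev_central t) as R. rewrite S_INR in R. lra.
Qed.

Lemma binom_half_central_bound t : (binom_half (2 * t) t) ^ 2 * (2 * INR t + 1) <= 1.
Proof.
  induction t; [simpl; lra|].
  pose proof (binom_half_central_S t) as E. rewrite S_INR.
  set (b := binom_half (2 * S t) (S t)) in *. set (a := binom_half (2 * t) t) in *.
  set (x := INR t) in *. assert (0 <= x) by apply pos_INR.
  assert (Eb : b = a * (2 * x + 1) / (2 * x + 2)) by (field_simplify_eq; lra).
  rewrite Eb.
  replace ((a * (2 * x + 1) / (2 * x + 2)) ^ 2 * (2 * (x + 1) + 1))
    with (a ^ 2 * (2 * x + 1) * ((2 * x + 1) * (2 * x + 3) / ((2 * x + 2) * (2 * x + 2))))
    by (field; lra).
  assert (0 <= a ^ 2 * (2 * x + 1)) by (pose proof (pow2_ge_0 a); nra).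
  assert ((2 * x + 1) * (2 * x + 3) / ((2 * x + 2) * (2 * x + 2)) <= 1).
  { apply Rmult_le_reg_r with ((2 * x + 2) * (2 * x + 2)); [nra|].
    unfold Rdiv. rewrite Rmult_assoc, Rinv_l by nra. nra. }
  nra.
Qed.

Lemma binom_diff_l1_bound n : (binom_diff_l1 n) ^ 2 * (INR n + 1) <= 4.
Proof.
  destruct (Nat.Even_or_Odd n) as [[t ->]|[t ->]].
  - rewrite (binom_diff_l1_mode _ t) by lia. pose proof (binom_half_central_bound t).
    rewrite mult_INR. simpl INR. nra.
  - rewrite (binom_diff_l1_mode _ (S t)) by lia. pose proof (binom_half_central_bound (S t)).
    replace (2 * t + 1)%nat with (S (2 * t)) by lia.
    assert (E : binom_half (S (2 * t)) (S t) = binom_half (2 * S t) (S t)).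
    { replace (2 * S t)%nat with (S (S (2 * t))) by lia.
      rewrite (binom_half_S (S (2 * t))).
      change (binom_half_prev (S (2 * t)) (S t)) with (binom_half (S (2 * t)) t).
      rewrite binom_half_odd_mode. lra. }
    rewrite E. rewrite S_INR, mult_INR in *. rewrite S_INR in *. simpl INR in *.
    pose proof (pow2_ge_0 (binom_half (2 * S t) (S t))). pose proof (pos_INR t). nra.
Qed.

(** * Smoothed differences *)

(* [diff_smooth h n F] is [F * (beta_n - beta_n shifted by h)], with [beta_n] the law of
   [B h] for [B ~ Binomial(n, 1/2)]; [k < n + 2] covers the support of [binom_diff n]. *)
Definition diff_smooth (h : list Z) n (F : list Z -> R) x :=
  sum_lt (n + 2) (fun k => binom_diff n k * F (iter_vsub h k x)).

Definition diff_smooth_l1 d h n F := sum_Zd d (fun x => Rabs (diff_smooth h n F x)).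

Lemma diff_smooth_S h n F x :
  (diff_smooth h n F x + diff_smooth h n F (vsub x h)) / 2 = diff_smooth h (S n) F x.
Proof.
  unfold diff_smooth. replace (S n + 2)%nat with (S (n + 2)) by lia.
  rewrite (sum_lt_ext _ (fun k => binom_diff (S n) k * F (iter_vsub h k x))
             (fun k => / 2 * (binom_diff n k * F (iter_vsub h k x)) +
                       / 2 * (binom_diff_prev n k * F (iter_vsub h k x))))
    by (intros; rewrite binom_diff_S; lra).
  rewrite sum_lt_add, !sum_lt_scal,
    (sum_lt_shift _ (fun k => binom_diff_prev n k * F (iter_vsub h k x))).
  assert (Z0 : binom_diff n (n + 2) = 0).
  { unfold binom_diff, binom_half_prev. replace (n + 2)%nat with (S (S n)) by lia.
    rewrite !binom_half_big by lia. lra. }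
  cbn [sum_lt binom_diff_prev iter_vsub]. rewrite Z0. lra.
Qed.

Lemma abs_diff_smooth_le d h n F x : length h = d -> length x = d -> nonneg_on d F ->
  Rabs (diff_smooth h n F x) <=
    sum_lt (n + 2) (fun k => Rabs (binom_diff n k) * F (iter_vsub h k x)).
Proof.
  intros Hh Hx HF. eapply Rle_trans; [apply sum_lt_abs|]. apply sum_lt_le.
  intros k _. rewrite Rabs_mult, (Rabs_right (F _)); [lra|].
  apply Rle_ge, HF, length_iter_vsub; auto.
Qed.

Lemma diff_smooth_summable d h n F : length h = d -> summable d F ->
  summable d (fun x => Rabs (diff_smooth h n F x)).
Proof.
  intros Hh HF.
  destruct (sum_Zd_lin_comb d (n + 2) (fun k => Rabs (binom_diff n k))
              (fun k x => F (iter_vsub h k x))) as [S _].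
  { intros k _. split; [apply Rabs_pos|apply sum_Zd_iter_vsub; auto]. }
  apply sum_Zd_mono with (2 := fun x Hx => abs_diff_smooth_le d h n F x Hh Hx (proj1 HF)); auto.
  intros x _; apply Rabs_pos.
Qed.

Lemma diff_smooth_l1_ge0 d h n F : length h = d -> summable d F -> 0 <= diff_smooth_l1 d h n F.
Proof. intros. apply sum_Zd_ge0, diff_smooth_summable; auto. Qed.

Lemma diff_smooth_l1_le d h n F : length h = d -> summable d F -> sum_Zd d F <= 1 ->
  diff_smooth_l1 d h n F <= binom_diff_l1 n.
Proof.
  intros Hh HF HF1.
  destruct (sum_Zd_lin_comb d (n + 2) (fun k => Rabs (binom_diff n k))
              (fun k x => F (iter_vsub h k x))) as [S E].
  { intros k _. split; [apply Rabs_pos|apply sum_Zd_iter_vsub; auto]. }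
  destruct (sum_Zd_mono d _ _ ltac:(intros x _; apply Rabs_pos)
              (fun x Hx => abs_diff_smooth_le d h n F x Hh Hx (proj1 HF)) S) as [_ L].
  unfold diff_smooth_l1. rewrite E in L. eapply Rle_trans; [exact L|]. apply sum_lt_le.
  intros k _. rewrite (proj2 (sum_Zd_iter_vsub d h k F Hh HF)).
  pose proof (Rabs_pos (binom_diff n k)). nra.
Qed.

Lemma dTV_diff_smooth_l1 d h F : length h = d -> summable d F ->
  dTV d F (law_shift F h) = diff_smooth_l1 d h 0 F / 2.
Proof.
  intros Hh HF.
  destruct (sum_Zd_ext d (fun x => Rabs (diff_smooth h 0 F x))
              (fun x => Rabs (F x - law_shift F h x))) as [S E];
    [|apply diff_smooth_summable; auto|].
  { intros x _. unfold diff_smooth, law_shift, binom_diff, binom_half_prev. simpl. f_equal. ring. }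
  rewrite dTV_sum_Zd, E; auto.
Qed.

(** * The overlap decomposition of a law *)

(* With probability [overlap_mass], [Y] is distributed as [Y' + eps h] with [eps] a fair
   coin independent of [Y']: [p = residual + overlap/2 + overlap(. - h)/2]. *)
Definition overlap (h : list Z) (p : list Z -> R) y := Rmin (p y) (p (vadd y h)).
Definition residual (h : list Z) (p : list Z -> R) y :=
  p y - overlap h p y / 2 - overlap h p (vsub y h) / 2.
Definition overlap_mass d h p := 1 - dTV d p (law_shift p h).

Lemma sum_Zd_pmf d p : is_pmf d p -> summable d p /\ sum_Zd d p = 1.
Proof.
  intros [H1 H2]. assert (summable d p).
  { split; [intros x _; auto|]. exists 1. intros l L1 L2. apply (proj1 H2). exists l; auto. }
  split; auto. apply sum_Zd_eq; auto.
Qed.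

Lemma overlap_le d h p y : length h = d -> length y = d ->
  overlap h p y <= p y /\ overlap h p (vsub y h) <= p y.
Proof.
  intros Hh Hy. unfold overlap. rewrite (vadd_vsub d) by auto. split; [apply Rmin_l|apply Rmin_r].
Qed.

Lemma sum_Zd_overlap d h p : length h = d -> is_pmf d p ->
  summable d (overlap h p) /\ sum_Zd d (overlap h p) = overlap_mass d h p.
Proof.
  intros Hh Hp. destruct (sum_Zd_pmf d p Hp) as [Sp Ep].
  assert (Hp0 : forall x, 0 <= p x) by apply Hp.
  destruct (sum_Zd_vsub_shift d h p Hh Sp) as [Sps Eps].
  set (m := fun x => Rmin (p (vsub x h)) (p x)).
  set (D := fun x => Rabs (p x - p (vsub x h))).
  destruct (sum_Zd_add d p _ (fun x => p x + p (vsub x h)) Sp Sps) as [Spp Epp]; [reflexivity|].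
  assert (Sm : summable d m)
    by (apply sum_Zd_mono with (g := p); auto; intros x _; [apply Rmin_glb|apply Rmin_r]; auto).
  assert (SD : summable d D).
  { apply sum_Zd_mono with (g := fun x => p x + p (vsub x h)); auto.
    - intros x _; apply Rabs_pos.
    - intros x _. pose proof (Hp0 x); pose proof (Hp0 (vsub x h)).
      unfold D, Rabs; destruct Rcase_abs; lra. }
  destruct (sum_Zd_scal d (/ 2) D (fun x => / 2 * D x)) as [SD2 ED2]; auto; [lra|].
  destruct (sum_Zd_add d m _ (fun x => m x + / 2 * D x) Sm SD2) as [_ E3]; [reflexivity|].
  destruct (sum_Zd_scal d (/ 2) (fun x => p x + p (vsub x h)) (fun x => m x + / 2 * D x))
    as [_ E4]; auto; [lra| |].
  { intros x _. unfold m, D, Rmin. destruct Rle_dec; unfold Rabs; destruct Rcase_abs; lra. }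
  destruct (sum_Zd_vadd_shift d h m Hh Sm) as [S1 E1].
  destruct (sum_Zd_ext d (fun x => m (vadd x h)) (overlap h p)) as [So Eo]; auto.
  { intros y Hy. unfold m, overlap. rewrite (vsub_vadd d); auto. }
  split; auto. rewrite Eo, E1. unfold overlap_mass. rewrite dTV_sum_Zd by auto.
  unfold law_shift. fold D. rewrite E3, ED2, Epp, Ep, Eps, Ep in E4. lra.
Qed.

Lemma sum_Zd_residual d h p : length h = d -> is_pmf d p ->
  summable d (residual h p) /\ sum_Zd d (residual h p) = 1 - overlap_mass d h p.
Proof.
  intros Hh Hp. destruct (sum_Zd_pmf d p Hp) as [Sp Ep].
  destruct (sum_Zd_overlap d h p Hh Hp) as [So Eo].
  assert (Sr : summable d (residual h p)).
  { apply sum_Zd_mono with (g := p); auto.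
    - intros y Hy. destruct (overlap_le d h p y Hh Hy). unfold residual. lra.
    - intros y Hy. pose proof (proj1 So y Hy); pose proof (proj1 So (vsub y h)).
      assert (inZd d (vsub y h)) by (apply length_vsub; auto).
      unfold residual. intuition lra. }
  destruct (sum_Zd_vsub_shift d h (overlap h p) Hh So) as [Ssh Esh].
  destruct (sum_Zd_scal d (/ 2) (overlap h p) (fun y => / 2 * overlap h p y)) as [S5 E5];
    auto; [lra|].
  destruct (sum_Zd_scal d (/ 2) (fun y => overlap h p (vsub y h))
              (fun y => / 2 * overlap h p (vsub y h))) as [S6 E6]; auto; [lra|].
  destruct (sum_Zd_add d _ _ (fun y => residual h p y + / 2 * overlap h p y) Sr S5) as [S7 E7];
    [reflexivity|].
  destruct (sum_Zd_add d _ _ p S7 S6) as [_ E8]; [intros y _; unfold residual; lra|].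
  split; auto. rewrite Ep, E7, E5, E6, Esh, Eo in E8. lra.
Qed.

Lemma overlap_mass_bounds d h p : length h = d -> is_pmf d p -> 0 <= overlap_mass d h p <= 1.
Proof.
  intros Hh Hp. destruct (sum_Zd_overlap d h p Hh Hp) as [So Eo].
  destruct (sum_Zd_residual d h p Hh Hp) as [Sr Er].
  pose proof (sum_Zd_ge0 d _ So); pose proof (sum_Zd_ge0 d _ Sr). lra.
Qed.

Lemma summable_mul_bounded d (c g : list Z -> R) : summable d c ->
  (forall y, inZd d y -> 0 <= g y <= 1) -> summable d (fun y => c y * g y).
Proof.
  intros Sc Hg. apply sum_Zd_mono with (g := c); auto.
  - intros y Hy. pose proof (proj1 Sc y Hy); pose proof (Hg y Hy). nra.
  - intros y Hy. pose proof (proj1 Sc y Hy); pose proof (Hg y Hy). nra.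
Qed.

Definition conv_residual_part h p (mu : list Z -> R) z y := residual h p y * mu (vsub z y).
Definition conv_overlap_part h p (mu : list Z -> R) z y :=
  overlap h p y * ((mu (vsub z y) + mu (vsub (vsub z h) y)) / 2).

Section ConvSplit.

Variables (d : nat) (h : list Z) (p mu : list Z -> R).
Hypotheses (Hh : length h = d) (Hp : is_pmf d p) (Hmu : summable d mu)
  (Hmu1 : forall w, inZd d w -> mu w <= 1).

Let mu_bounded z : inZd d z -> forall y, inZd d y -> 0 <= mu (vsub z y) <= 1.
Proof.
  intros Hz y Hy. assert (inZd d (vsub z y)) by (apply length_vsub; auto).
  split; auto. apply Hmu; auto.
Qed.

Let So := proj1 (sum_Zd_overlap d h p Hh Hp).

Lemma conv_residual_part_summable z : inZd d z -> summable d (conv_residual_part h p mu z).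
Proof.
  intros Hz. apply summable_mul_bounded; [apply (sum_Zd_residual d h p Hh Hp)|now apply mu_bounded].
Qed.

Lemma conv_overlap_part_summable z : inZd d z -> summable d (conv_overlap_part h p mu z).
Proof.
  intros Hz. apply summable_mul_bounded; auto. intros y Hy.
  assert (inZd d (vsub z h)) by (apply length_vsub; auto).
  pose proof (mu_bounded z Hz y Hy); pose proof (mu_bounded (vsub z h) H y Hy). lra.
Qed.

(* The mass [overlap(y - h)/2] sitting at [y] is moved to [y - h], which turns
   [mu (z - y)] into [mu (z - h - y)]. *)
Lemma conv_split z : inZd d z ->
  conv d p mu z = sum_Zd d (conv_residual_part h p mu z) + sum_Zd d (conv_overlap_part h p mu z).
Proof.
  intros Hz. pose proof (mu_bounded z Hz) as Hm.
  set (f1 := fun y => overlap h p y * (mu (vsub z y) / 2)).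
  set (f2 := fun y => overlap h p (vsub y h) * (mu (vsub z y) / 2)).
  set (f3 := fun y => overlap h p y * (mu (vsub (vsub z h) y) / 2)).
  assert (S1 : summable d f1)
    by (apply summable_mul_bounded; auto; intros y Hy; pose proof (Hm y Hy); lra).
  assert (S2 : summable d f2).
  { apply summable_mul_bounded; [apply (sum_Zd_vsub_shift d h _ Hh So)|].
    intros y Hy; pose proof (Hm y Hy); lra. }
  destruct (sum_Zd_vadd_shift d h f2 Hh S2) as [S2' E2'].
  destruct (sum_Zd_ext d (fun w => f2 (vadd w h)) f3) as [S3 E3]; auto.
  { intros w Hw. unfold f2, f3. rewrite (vsub_vadd d), (vsub_vadd_r d); auto. }
  pose proof (conv_residual_part_summable z Hz) as SA.
  destruct (sum_Zd_add d f1 f3 (conv_overlap_part h p mu z) S1 S3) as [_ EB].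
  { intros y _. unfold conv_overlap_part, f1, f3. lra. }
  destruct (sum_Zd_add d _ _ (fun y => conv_residual_part h p mu z y + f1 y) SA S1)
    as [S4 E4]; [reflexivity|].
  destruct (sum_Zd_add d _ _ (fun y => p y * mu (vsub z y)) S4 S2) as [_ E5].
  { intros y Hy. unfold conv_residual_part, f1, f2, residual. lra. }
  change (conv d p mu z) with (sum_Zd d (fun y => p y * mu (vsub z y))).
  rewrite E5, E4, EB, E3, E2'. lra.
Qed.

Lemma abs_diff_smooth_conv_le n x : inZd d x ->
  Rabs (diff_smooth h n (conv d p mu) x) <=
    sum_Zd d (fun y => residual h p y * Rabs (diff_smooth h n mu (vsub x y))) +
    sum_Zd d (fun y => overlap h p y * Rabs (diff_smooth h (S n) mu (vsub x y))).
Proof.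
  intros Hx.
  assert (Zk : forall k, inZd d (iter_vsub h k x)) by (intros; apply length_iter_vsub; auto).
  assert (EG : diff_smooth h n (conv d p mu) x =
     sum_lt (n + 2) (fun k =>
       binom_diff n k * sum_Zd d (conv_residual_part h p mu (iter_vsub h k x))) +
     sum_lt (n + 2) (fun k =>
       binom_diff n k * sum_Zd d (conv_overlap_part h p mu (iter_vsub h k x)))).
  { unfold diff_smooth. rewrite <- sum_lt_add. apply sum_lt_ext. intros k _.
    rewrite conv_split by auto. ring. }
  destruct (abs_lin_comb_le_sum_Zd d (n + 2) (binom_diff n)
              (fun k => conv_residual_part h p mu (iter_vsub h k x))) as [SA LA].
  { intros k _. apply conv_residual_part_summable; auto. }
  destruct (abs_lin_comb_le_sum_Zd d (n + 2) (binom_diff n)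
              (fun k => conv_overlap_part h p mu (iter_vsub h k x))) as [SB LB].
  { intros k _. apply conv_overlap_part_summable; auto. }
  destruct (sum_Zd_ext d (fun y => Rabs (sum_lt (n + 2) (fun k =>
                binom_diff n k * conv_residual_part h p mu (iter_vsub h k x) y)))
              (fun y => residual h p y * Rabs (diff_smooth h n mu (vsub x y))))
    as [SA' EA']; auto.
  { intros y Hy. symmetry. unfold conv_residual_part, diff_smooth.
    rewrite (sum_lt_ext _ _ (fun k =>
               residual h p y * (binom_diff n k * mu (iter_vsub h k (vsub x y))))).
    - rewrite sum_lt_scal, Rabs_mult, (Rabs_right (residual h p y)); auto.
      apply Rle_ge, (sum_Zd_residual d h p Hh Hp); auto.
    - intros k _. rewrite (vsub_iter_vsub d); auto. ring. }
  destruct (sum_Zd_ext d (fun y => Rabs (sum_lt (n + 2) (fun k =>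
                binom_diff n k * conv_overlap_part h p mu (iter_vsub h k x) y)))
              (fun y => overlap h p y * Rabs (diff_smooth h (S n) mu (vsub x y))))
    as [SB' EB']; auto.
  { intros y Hy. symmetry. unfold conv_overlap_part. rewrite <- diff_smooth_S. unfold diff_smooth.
    rewrite (sum_lt_ext _ _ (fun k => overlap h p y *
      (/ 2 * (binom_diff n k * mu (iter_vsub h k (vsub x y))) +
       / 2 * (binom_diff n k * mu (iter_vsub h k (vsub (vsub x y) h)))))).
    - rewrite sum_lt_scal, sum_lt_add, !sum_lt_scal, Rabs_mult, (Rabs_right (overlap h p y)).
      + f_equal. f_equal. lra.
      + apply Rle_ge, So; auto.
    - intros k _. assert (inZd d (vsub x y)) by (apply length_vsub; auto).
      rewrite (vsub_iter_vsub d), (vsub_comm d (iter_vsub h k x) h y), (vsub_iter_vsub d h k x y),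
        (vsub_iter_vsub d h k (vsub x y) h); auto.
      field. apply Zk. }
  rewrite EG, EA', EB'.
  eapply Rle_trans; [apply Rabs_triang|lra].
Qed.

End ConvSplit.

Lemma sum_Zd_conv_le1 d p mu : is_pmf d p -> summable d mu -> sum_Zd d mu <= 1 ->
  summable d (conv d p mu) /\ sum_Zd d (conv d p mu) <= 1.
Proof.
  intros Hp Hmu H1. destruct (sum_Zd_pmf d p Hp) as [Sp Ep].
  destruct (sum_Zd_conv_le d p mu Sp Hmu) as [S L]. rewrite Ep in L.
  split; [exact S|]. change (conv d p mu) with (fun x => sum_Zd d (fun y => p y * mu (vsub x y))).
  lra.
Qed.

Lemma diff_smooth_l1_conv_le d h p mu n : length h = d -> is_pmf d p ->
  summable d mu -> sum_Zd d mu <= 1 ->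
  diff_smooth_l1 d h n (conv d p mu) <=
    (1 - overlap_mass d h p) * diff_smooth_l1 d h n mu +
    overlap_mass d h p * diff_smooth_l1 d h (S n) mu.
Proof.
  intros Hh Hp Hmu H1.
  assert (Hmu1 : forall w, inZd d w -> mu w <= 1)
    by (intros w Hw; eapply Rle_trans; [apply le_sum_Zd|]; eauto).
  destruct (sum_Zd_overlap d h p Hh Hp) as [So Eo].
  destruct (sum_Zd_residual d h p Hh Hp) as [Sr Er].
  destruct (sum_Zd_conv_le d (residual h p) _ Sr (diff_smooth_summable d h n mu Hh Hmu))
    as [S1 L1].
  destruct (sum_Zd_conv_le d (overlap h p) _ So (diff_smooth_summable d h (S n) mu Hh Hmu))
    as [S2 L2].
  destruct (sum_Zd_add d _ _ (fun x =>
              sum_Zd d (fun y => residual h p y * Rabs (diff_smooth h n mu (vsub x y))) +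
              sum_Zd d (fun y => overlap h p y * Rabs (diff_smooth h (S n) mu (vsub x y))))
              S1 S2) as [S3 E3]; [reflexivity|].
  destruct (sum_Zd_mono d (fun x => Rabs (diff_smooth h n (conv d p mu) x)) _
              ltac:(intros x _; apply Rabs_pos)
              (abs_diff_smooth_conv_le d h p mu Hh Hp Hmu Hmu1 n)
              S3) as [_ L].
  unfold diff_smooth_l1 at 1. rewrite E3 in L. rewrite Eo, Er in *.
  fold (diff_smooth_l1 d h n mu) (diff_smooth_l1 d h (S n) mu) in *. lra.
Qed.

Lemma sum_law_summable d ps : (forall p, In p ps -> is_pmf d p) ->
  summable d (sum_law d ps) /\ sum_Zd d (sum_law d ps) <= 1.
Proof.
  induction ps as [|p ps IH]; intros Hps; [apply sum_Zd_delta0|].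
  destruct IH as [S1 L1]; [intros; apply Hps; simpl; auto|].
  apply sum_Zd_conv_le1; auto. apply Hps; simpl; auto.
Qed.

(** * The recursion over the summands *)

Lemma fold_Rmin_le (f : nat -> R) base l j : In j l ->
  fold_right (fun j a => Rmin (f j) a) base l <= f j.
Proof.
  induction l as [|i l IH]; simpl; intros H; [contradiction|].
  destruct H as [->|H]; [apply Rmin_l|]. eapply Rle_trans; [apply Rmin_r|auto].
Qed.

Lemma fold_Rmin_le_base (f : nat -> R) base l : fold_right (fun j a => Rmin (f j) a) base l <= base.
Proof. induction l; simpl; [lra|]. eapply Rle_trans; [apply Rmin_r|auto]. Qed.

Lemma fold_Rmin_glb (f : nat -> R) base l c : (forall j, In j l -> c <= f j) -> c <= base ->
  c <= fold_right (fun j a => Rmin (f j) a) base l.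
Proof. induction l; simpl; intros H Hb; auto. apply Rmin_glb; auto. Qed.

Lemma u_coef_bounds d p j : (j < d)%nat -> is_pmf d p ->
  0 <= u_coef d p /\ u_coef d p <= overlap_mass d (evec d j) p.
Proof.
  intros Hj Hp. unfold u_coef, min_coord, overlap_mass. split.
  - apply fold_Rmin_glb.
    + intros i _. apply (overlap_mass_bounds d (evec d i) p (length_evec d i) Hp).
    + apply (overlap_mass_bounds d (evec d 0) p (length_evec d 0) Hp).
  - destruct j; [apply fold_Rmin_le_base|].
    apply (fold_Rmin_le (fun j => 1 - dTV d p (law_shift p (evec d j)))). apply in_seq. lia.
Qed.

Lemma s_coef_ge0 d ps : (1 <= d)%nat -> (forall p, In p ps -> is_pmf d p) -> 0 <= s_coef d ps.
Proof.
  intros Hd. induction ps as [|p ps IH]; intros Hps; simpl; [lra|].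
  pose proof (u_coef_bounds d p 0 ltac:(lia) (Hps p (or_introl eq_refl))).
  assert (0 <= s_coef d ps) by (apply IH; intros; apply Hps; simpl; auto). lra.
Qed.

(* Since [t |-> t^2] is convex, [W^2 <= (1 - a) A^2 + a B^2], and
   [(1 - a)/x + a/(x + 1) <= 1/(x + a/2)] for [x >= 1]. *)
Lemma convex_comb_sq_bound A B a u x W : 0 <= A -> 0 <= B -> 0 <= a <= 1 -> 0 <= u <= a ->
  1 <= x -> A ^ 2 * x <= 4 -> B ^ 2 * (x + 1) <= 4 -> 0 <= W <= (1 - a) * A + a * B ->
  W ^ 2 * (x + u / 2) <= 4.
Proof.
  intros HA HB Ha Hu Hx H1 H2 HW.
  set (P := (1 - a) * A ^ 2 + a * B ^ 2).
  assert (S1 : W ^ 2 <= P).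
  { assert (W ^ 2 <= ((1 - a) * A + a * B) ^ 2) by nra.
    assert (P - ((1 - a) * A + a * B) ^ 2 = (a * (1 - a)) * (A - B) ^ 2) by (unfold P; ring).
    assert (0 <= (a * (1 - a)) * (A - B) ^ 2) by (apply Rmult_le_pos; [nra|apply pow2_ge_0]).
    lra. }
  assert (S2 : P * (x * (x + 1)) <= 4 * ((1 - a) * (x + 1) + a * x)).
  { unfold P. assert (0 <= (1 - a) * (x + 1)) by nra. assert (0 <= a * x) by nra. nra. }
  assert (S3 : 4 * ((1 - a) * (x + 1) + a * x) * (x + a / 2) <= 4 * (x * (x + 1))) by nra.
  assert (S4 : P * (x + a / 2) <= 4).
  { assert (0 < x * (x + 1)) by nra. assert (0 <= P) by (unfold P; nra).
    apply Rmult_le_reg_r with (x * (x + 1)); auto. nra. }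
  assert (0 <= W ^ 2) by nra. nra.
Qed.

Lemma diff_smooth_l1_sum_law_bound d j ps : (1 <= d)%nat -> (j < d)%nat ->
  (forall p, In p ps -> is_pmf d p) -> forall n,
  (diff_smooth_l1 d (evec d j) n (sum_law d ps)) ^ 2 * (INR n + 1 + s_coef d ps / 2) <= 4.
Proof.
  intros Hd Hj. pose proof (length_evec d j) as Hh. set (h := evec d j) in *.
  induction ps as [|p ps IH]; intros Hps n.
  - destruct (sum_Zd_delta0 d) as [S0 E0]. simpl sum_law; simpl s_coef.
    pose proof (diff_smooth_l1_le d h n (delta0 d) Hh S0 E0).
    pose proof (diff_smooth_l1_ge0 d h n (delta0 d) Hh S0).
    pose proof (binom_diff_l1_bound n). pose proof (pos_INR n).
    assert (diff_smooth_l1 d h n (delta0 d) ^ 2 <= binom_diff_l1 n ^ 2) by (apply pow_incr; lra).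
    replace (INR n + 1 + 0 / 2) with (INR n + 1) by field. nra.
  - assert (Hp : is_pmf d p) by (apply Hps; simpl; auto).
    assert (Hps' : forall q, In q ps -> is_pmf d q) by (intros; apply Hps; simpl; auto).
    destruct (sum_law_summable d ps Hps') as [Sm Em].
    destruct (sum_Zd_conv_le1 d p _ Hp Sm Em) as [Sc _].
    destruct (u_coef_bounds d p j Hj Hp).
    change (sum_law d (p :: ps)) with (conv d p (sum_law d ps)).
    change (s_coef d (p :: ps)) with (u_coef d p + s_coef d ps).
    replace (INR n + 1 + (u_coef d p + s_coef d ps) / 2)
      with ((INR n + 1 + s_coef d ps / 2) + u_coef d p / 2) by field.
    pose proof (IH Hps' (S n)) as I2. rewrite S_INR in I2.
    pose proof (s_coef_ge0 d ps Hd Hps'). pose proof (pos_INR n).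
    apply (convex_comb_sq_bound _ _ (overlap_mass d h p)
             _ _ _ (diff_smooth_l1_ge0 d h n _ Hh Sm) (diff_smooth_l1_ge0 d h (S n) _ Hh Sm)
             (overlap_mass_bounds d h p Hh Hp)); auto; try lra.
    split; [apply diff_smooth_l1_ge0; auto|apply diff_smooth_l1_conv_le; auto].
Qed.

Lemma le_div_sqrt t s C : 0 <= t -> 0 < s -> 0 <= C -> t ^ 2 * s <= C ^ 2 -> t <= C / sqrt s.
Proof.
  intros Ht Hs HC H. pose proof (sqrt_lt_R0 s Hs) as Hq. pose proof (sqrt_sqrt s ltac:(lra)).
  apply Rmult_le_reg_r with (sqrt s); auto. replace (C / sqrt s * sqrt s) with C by (field; lra).
  assert (E : (t * sqrt s) ^ 2 = t ^ 2 * s) by (simpl; nra).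
  assert (0 <= t * sqrt s) by nra. nra.
Qed.

Theorem lemma4p1 :
  exists C : R,
    forall (d : nat) (ps : list (list Z -> R)),
      (1 <= d)%nat ->
      (forall p, In p ps -> is_pmf d p) ->
      0 < s_coef d ps ->
      forall j : nat, (j < d)%nat ->
        dTV d (sum_law d ps) (law_shift (sum_law d ps) (evec d j))
          <= C / sqrt (s_coef d ps).
Proof.
  exists 2. intros d ps Hd Hps Hs j Hj.
  pose proof (length_evec d j) as Hh.
  destruct (sum_law_summable d ps Hps) as [Sm _].
  pose proof (diff_smooth_l1_sum_law_bound d j ps Hd Hj Hps 0) as H0. simpl INR in H0.
  rewrite (dTV_diff_smooth_l1 d) in * by auto.
  pose proof (diff_smooth_l1_ge0 d (evec d j) 0 _ Hh Sm).
  set (v := diff_smooth_l1 d (evec d j) 0 (sum_law d ps)) in *.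
  apply le_div_sqrt; auto; [lra|lra|]. pose proof (pow2_ge_0 v). nra.
Qed.
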